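(* Let $\rho$ be a worst-case risk measure that uses an uncertainty set $\mathcal{U}\subseteq\mathbb{R}^K$ such that $\mathcal{U}\subseteq\mathcal{A}(\mathcal{U})$. Then $\rho$ satisfies the bounded conditional market risk property.
   Context: Returns $r\in\mathbb{R}^K$ with natural filtration $\mathcal{F}_k=\sigma(r_1,\dots,r_k)$; investment amounts $\zeta_\ell$ are $\mathcal{F}_\ell$-measurable functions of $r_{1:\ell}$. The worst-case risk measure with uncertainty set $\mathcal{U}$ is $\rho=\rho_0\circ\cdots\circ\rho_{K-1}$ where $\rho_k(X,r)=\sup_{r'\in\mathcal{U}:r'_{1:k}=r_{1:k}}X(r')$ if some $r'\in\mathcal{U}$ has $r'_{1:k}=r_{1:k}$, and otherwise $\rho_k(X,r)=X([r_{1:k};0_{k+1:K}])$ (i.e. $\inf_{\epsilon>0}\operatorname{ess\,sup}$ of $X$ over $r'$ with $r'_{1:k}=r_{1:k}$, $\|r'_{k+1:K}\|_\infty\le\epsilon$). Let $\rho_{k,K}=\rho_k\circ\cdots\circ\rho_{K-1}$. Define $\mathcal{A}(\mathcal{U})=\{r\in\mathbb{R}^K:\forall k\in\{0,\dots,K-1\},\ \inf_{\zeta_k,\dots,\zeta_{K-1}}\rho_{k,K}(-\sum_{\ell=k}^{K-1}\zeta_\ell r_{\ell+1},r)\in(-\infty,0]\}$. Bounded conditional market risk: for each $k\in\{0,\dots,K-1\}$, $0\ge\inf_{\zeta_k,\dots,\zeta_{K-1}}\rho_{k,K}(-\sum_{\ell=k}^{K-1}\zeta_\ell r_{\ell+1})>-\infty$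 almost surely. *)

From HB Require Import structures.
From mathcomp Require Import all_boot all_order all_algebra.
From mathcomp Require Import all_classical all_reals all_analysis.
Unset Printing Implicit Defensive.
Import Order.TTheory GRing.Theory Num.Theory.
Import numFieldNormedType.Exports.
Local Open Scope classical_set_scope.
Local Open Scope ring_scope.

(* A return vector r in R^K is a row vector 'rV[R]_K with coordinates r ord0 i; the paper's (1-indexed)
   r_{l+1} is the 0-indexed coordinate r ord0 l, and r_{1:k} is (r ord0 i)_{i < k}. *)
Notation retvec R K := 'rV[R]_K.

(* Generators of the natural filtration F_l = sigma(r_1,...,r_l):
   the sets {r | r_i in A}, i < l (0-indexed), A Borel in R. *)
Definition filt_gen (R : realType) (K l : nat) : set (set (retvec R K)) :=
  [set E | exists (i : 'I_K) (A : set R),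
      (i < l)%N /\ measurable A /\ E = (fun r : retvec R K => r ord0 i) @^-1` A].

Definition filt (R : realType) (K l : nat) : set (set (retvec R K)) :=
  <<s filt_gen R K l >>.

Notation Omega R K := (g_sigma_algebraType (filt_gen R K K)).

(* Investment strategies: zeta l is F_l-measurable (for every l). *)
Definition adapted {R : realType} {K : nat} (zeta : nat -> retvec R K -> R) :=
  forall (l : nat) (B : set R), measurable B -> filt R K l (zeta l @^-1` B).

Definition agree {R : realType} {K : nat} (k : nat) (r r' : retvec R K) :=
  forall i : 'I_K, (i < k)%N -> r' ord0 i = r ord0 i.

Definition trunc {R : realType} {K : nat} (k : nat) (r : retvec R K) : retvec R K :=
  \row_(i < K) (if (i < k)%N then r ord0 i else 0).

Definition rho_k {R : realType} {K : nat} (U : set (retvec R K)) (k : nat)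
    (X : retvec R K -> \bar R) : retvec R K -> \bar R :=
  fun r => if pselect (exists r', U r' /\ agree k r r')
           then ereal_sup [set X r' | r' in [set r' | U r' /\ agree k r r']]
           else X (trunc k r).

Definition rho_kK {R : realType} {K : nat} (U : set (retvec R K)) (k : nat)
    (X : retvec R K -> \bar R) : retvec R K -> \bar R :=
  foldr (fun j Y => rho_k U j Y) X (iota k (K - k)).

Definition rho_wc {R : realType} {K : nat} (U : set (retvec R K)) :=
  rho_kK U 0.

Definition neg_gain {R : realType} {K : nat} (k : nat)
    (zeta : nat -> retvec R K -> R) : retvec R K -> \bar R :=
  fun r => (- \sum_(i < K | (k <= i)%N) zeta i r * r ord0 i)%:E.

Definition min_risk {R : realType} {K : nat} (U : set (retvec R K)) (k : nat)
    (r : retvec R K) : \bar R :=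
  ereal_inf [set rho_kK U k (neg_gain k zeta) r | zeta in @adapted R K].

Definition AU {R : realType} {K : nat} (U : set (retvec R K)) : set (retvec R K) :=
  [set r | forall k : nat, (k < K)%N ->
     (-oo < min_risk U k r)%E /\ (min_risk U k r <= 0)%E].

Definition bounded_cond_market_risk {R : realType} {K : nat}
    (U : set (retvec R K)) (P : probability (Omega R K) R) :=
  forall k : nat, (k < K)%N ->
    {ae P, forall r : Omega R K, (min_risk U k r <= 0)%E /\ (-oo < min_risk U k r)%E}.

From HB Require Import structures.
From mathcomp Require Import all_boot all_order all_algebra.
From mathcomp Require Import all_classical all_reals all_analysis.
Import numFieldNormedType.Exports.
Import Order.TTheory GRing.Theory Num.Theory.
Local Open Scope classical_set_scope.
Local Open Scope ring_scope.

(* The minimal conditional risk at time k depends only on r_{1:k}.  If r_{1:k}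
   is the prefix of some u in U, then the minimal risk at r is the one at u,
   which lies in (-oo, 0] because U is contained in A(U).  Otherwise no rho_j
   with j >= k ever finds a point of U, so rho_{k,K} just evaluates its
   argument at [r_{1:k}; 0], where every gain from time k on vanishes: the
   minimal risk is 0.  Hence the bounds hold at every r, a fortiori almost
   surely. *)

Section Agree.
Context {R : realType} {K : nat}.
Implicit Types (r s u : retvec R K).

Lemma agree_sym {k r u} : agree k r u -> agree k u r.
Proof. by move=> hru i ik; rewrite hru. Qed.

Lemma agree_trans {k r u s} : agree k r u -> agree k u s -> agree k r s.
Proof. by move=> hru hus i ik; rewrite hus // hru. Qed.

Lemma agree_le {m n r u} : (n <= m)%N -> agree m r u -> agree n r u.
Proof. by move=> nm hru i ilt; apply: hru; apply: leq_trans nm. Qed.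

Lemma agree_trunc k r : agree k r (trunc k r).
Proof. by move=> i ik; rewrite mxE ik. Qed.

Lemma truncS_trunc k r : trunc k.+1 (trunc k r) = trunc k r.
Proof.
apply/matrixP => ? i; rewrite !mxE ord1.
by case: (ltnP i k) => ik; [rewrite ltnS (ltnW ik) | case: ifP].
Qed.

Lemma trunc_id k r : (K <= k)%N -> trunc k r = r.
Proof.
by move=> Kk; apply/matrixP => j i; rewrite mxE (ord1 j) (leq_trans (ltn_ord i) Kk).
Qed.

End Agree.

Section WorstCaseRisk.
Context {R : realType} {K : nat} (U : set (retvec R K)).
Implicit Types (r s u : retvec R K) (X : retvec R K -> \bar R).

Definition U_prefix k r := exists u, U u /\ agree k r u.

Lemma U_prefix_agree {k r s} : agree k r s -> U_prefix k s -> U_prefix k r.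
Proof. by move=> hrs [u [Uu hsu]]; exists u; split=> //; apply: agree_trans hsu. Qed.

Lemma U_prefix_le {m n r} : (n <= m)%N -> U_prefix m r -> U_prefix n r.
Proof. by move=> nm [u [Uu hru]]; exists u; split=> //; apply: agree_le hru. Qed.

Lemma rho_k_agree k X r s : agree k r s -> rho_k U k X r = rho_k U k X s.
Proof.
move=> hrs; rewrite /rho_k.
have hsr := agree_sym hrs.
have -> : [set r' | U r' /\ agree k r r'] = [set r' | U r' /\ agree k s r'].
  by apply/seteqP; split=> x /= [Ux h]; split=> //; apply: agree_trans h.
case: pselect => [pr|npr]; case: pselect => [ps|nps] //.
- by case: nps; apply: U_prefix_agree pr.
- by case: npr; apply: U_prefix_agree ps.
- congr X; apply/matrixP => i j; rewrite !mxE.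
  by case: ifP => // ik; rewrite hrs.
Qed.

Lemma rho_kK_recl k X : (k < K)%N -> rho_kK U k X = rho_k U k (rho_kK U k.+1 X).
Proof. by move=> kK; rewrite /rho_kK -subnSK. Qed.

Lemma rho_kK_ge k X : (K <= k)%N -> rho_kK U k X = X.
Proof. by move=> Kk; rewrite /rho_kK (eqP Kk). Qed.

Lemma rho_kK_agree k X r s : (k < K)%N -> agree k r s ->
  rho_kK U k X r = rho_kK U k X s.
Proof. by move=> kK hrs; rewrite rho_kK_recl //; apply: rho_k_agree. Qed.

Lemma min_risk_agree {k r s} : (k < K)%N -> agree k r s ->
  min_risk U k r = min_risk U k s.
Proof.
move=> kK hrs; rewrite /min_risk; congr ereal_inf.
by apply: eq_imagel => zeta _; apply: rho_kK_agree.
Qed.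

Lemma rho_kK_no_U_prefix k X r : ~ U_prefix k r -> rho_kK U k X r = X (trunc k r).
Proof.
move: {2}(K - k)%N (erefl (K - k)%N) => n; elim: n k r => [|n IHn] k r Kk nUr.
  by rewrite rho_kK_ge ?trunc_id // -subn_eq0 Kk.
have kK : (k < K)%N by rewrite -subn_gt0 Kk.
have nUtr : ~ U_prefix k.+1 (trunc k r).
  by move=> /(U_prefix_le (leqnSn k)) /(U_prefix_agree (agree_trunc k r)).
rewrite rho_kK_recl // /rho_k; case: pselect => //= _.
by rewrite IHn ?truncS_trunc // subnS Kk.
Qed.

Lemma neg_gain_trunc k zeta r : neg_gain k zeta (trunc k r) = 0%E.
Proof.
rewrite /neg_gain big1 ?oppr0 // => i ki.
by rewrite mxE ltnNge ki mulr0.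
Qed.

Lemma adapted0 : @adapted R K (fun _ _ => 0).
Proof.
move=> l B _; rewrite preimage_cst.
case: ifP => _; last exact: sigma_algebra0.
by rewrite -setC0; apply: sigma_algebraC; apply: sigma_algebra0.
Qed.

Lemma min_risk_no_U_prefix k r : ~ U_prefix k r -> min_risk U k r = 0%E.
Proof.
move=> nUr; rewrite /min_risk.
suff -> : [set rho_kK U k (neg_gain k zeta) r | zeta in @adapted R K] = [set 0%E].
  exact: ereal_inf1.
apply/seteqP; split=> x /=.
  by case=> zeta _ <-; rewrite rho_kK_no_U_prefix // neg_gain_trunc.
move=> ->; exists (fun _ _ => 0); first exact: adapted0.
by rewrite rho_kK_no_U_prefix // neg_gain_trunc.
Qed.

End WorstCaseRisk.

Theorem lemma7 (R : realType) (K : nat) (U : set (retvec R K))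
    (P : probability (Omega R K) R) :
  U `<=` AU U -> bounded_cond_market_risk U P.
Proof.
move=> UA k kK; apply: aeW => r.
have [[u [Uu hru]]|nUr] := pselect (U_prefix U k r).
  have [lb ub] := UA u Uu k kK.
  by rewrite (min_risk_agree U kK hru); split.
by rewrite min_risk_no_U_prefix.
Qed.
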